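(* Let $V$ be a finite nonempty set of voters, $A$ a finite set of alternatives, $A=B\uplus C$ a partition, and $G:\mathcal{P}(V,B)\to B$, $H:\mathcal{P}(V,C)\to C$ social choice functions. Let $F:\mathcal{P}(V,A)\to S_2(A)$ be the consular election rule $F(P)=\{G(P|_B),H(P|_C)\}$. Then $F$ satisfies SPP and SPO if and only if $G$ and $H$ are strategy-proof.
   Context: A profile over a set $X$ of alternatives assigns to each voter $i\in V$ a linear order on $X$; $\mathcal{P}(V,X)$ is the set of profiles; $P|_B$ is the profile of restrictions to $B$; $P_i'P_{-i}$ replaces voter $i$'s order by $P_i'$. A social choice function $G:\mathcal{P}(V,B)\to B$ is strategy-proof if for every profile $Q$, voter $i$ and linear order $Q_i'$ on $B$, $G(Q)\succeq_i G(Q_i'Q_{-i})$ in the order $Q_i$. $S_2(A)$ is the set of 2-element subsets of $A$. For a consular election rule $F:\mathcal{P}(V,A)\to S_2(A)$: SPO means that for all $P$, $i$, $P_i'$, $\mathrm{best}(P_i,F(P))\succeq_i\mathrm{best}(P_i,F(P_i'P_{-i}))$; SPP means the same with $\mathrm{worst}$, where $\mathrm{best}(P_i,W)$, $\mathrm{worst}(P_i,W)$ are the $P_i$-best and $P_i$-worst elements of $W$. *)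

From mathcomp Require Import all_boot.
Set Implicit Arguments. Unset Strict Implicit. Unset Printing Implicit Defensive.

(* A linear order on X, given by its weak relation [pref x y] = "x is weakly
   preferred to y" (x ⪰ y): reflexive, antisymmetric, transitive, total. *)
Record lorder (X : finType) := LOrder {
  pref : rel X;
  pref_refl : reflexive pref;
  pref_anti : antisymmetric pref;
  pref_trans : transitive pref;
  pref_total : total pref }.

Definition profile (V X : finType) := V -> lorder X.

Definition upd (V X : finType) (P : profile V X) (i : V) (Pi' : lorder X)
  : profile V X := fun j => if j == i then Pi' else P j.

Definition sub (A : finType) (B : {set A}) : finType := {x : A | x \in B}.

Section Restrict.
Variables (A : finType) (B : {set A}) (r : lorder A).
Definition rpref : rel (sub B) := fun x y => pref r (val x) (val y).
Lemma rpref_refl : reflexive rpref. Proof. by move=> x; apply: pref_refl. Qed.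
Lemma rpref_anti : antisymmetric rpref.
Proof. by move=> x y H; apply: val_inj; exact: pref_anti H. Qed.
Lemma rpref_trans : transitive rpref.
Proof. by move=> x y z; apply: pref_trans. Qed.
Lemma rpref_total : total rpref. Proof. by move=> x y; apply: pref_total. Qed.
Definition restrict : lorder (sub B) :=
  LOrder rpref_refl rpref_anti rpref_trans rpref_total.
End Restrict.

Definition restrict_prof (V A : finType) (P : profile V A) (B : {set A})
  : profile V (sub B) := fun i => restrict B (P i).

Definition strategy_proof (V X : finType) (G : profile V X -> X) : Prop :=
  forall (Q : profile V X) (i : V) (Qi' : lorder X),
    pref (Q i) (G Q) (G (upd Q i Qi')).

Definition is_best (X : finType) (r : lorder X) (W : {set X}) (x : X) : Prop :=
  x \in W /\ forall y, y \in W -> pref r x y.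
Definition is_worst (X : finType) (r : lorder X) (W : {set X}) (x : X) : Prop :=
  x \in W /\ forall y, y \in W -> pref r y x.

Definition S2 (A : finType) (W : {set A}) : Prop := #|W| = 2.

Definition SPO (V A : finType) (F : profile V A -> {set A}) : Prop :=
  forall (P : profile V A) (i : V) (Pi' : lorder A) (b b' : A),
    is_best (P i) (F P) b -> is_best (P i) (F (upd P i Pi')) b' ->
    pref (P i) b b'.
Definition SPP (V A : finType) (F : profile V A -> {set A}) : Prop :=
  forall (P : profile V A) (i : V) (Pi' : lorder A) (w w' : A),
    is_worst (P i) (F P) w -> is_worst (P i) (F (upd P i Pi')) w' ->
    pref (P i) w w'.

Definition consular (V A : finType) (B C : {set A})
  (G : profile V (sub B) -> sub B) (H : profile V (sub C) -> sub C)
  (P : profile V A) : {set A} :=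
  [set val (G (restrict_prof P B)); val (H (restrict_prof P C))].

From mathcomp Require Import all_boot.
From Stdlib Require Import FunctionalExtensionality ProofIrrelevance.

(* If G and H are strategy-proof, a manipulation can only worsen each consul
   separately in the manipulator's true order, hence also the better and the
   worse of the two: this gives SPO and SPP.  Conversely, lift a profile Q on B
   to A by putting B on top of every voter's order; in the lifted profile the
   B-consul is every voter's favourite element of F(P), so SPO applied there
   says exactly that G is strategy-proof at Q (and symmetrically for H). *)

Set Implicit Arguments. Unset Strict Implicit.

Section TwoElementSets.
Variables (X : finType) (r : lorder X).

Lemma best_set2_mono (a c a' c' b b' : X) :
  pref r a a' -> pref r c c' ->
  is_best r [set a; c] b -> is_best r [set a'; c'] b' -> pref r b b'.
Proof.
move=> le_aa' le_cc' [_ b_max] [/set2P[]-> _].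
- exact: pref_trans (b_max a (set21 a c)) le_aa'.
- exact: pref_trans (b_max c (set22 a c)) le_cc'.
Qed.

Lemma worst_set2_mono (a c a' c' w w' : X) :
  pref r a a' -> pref r c c' ->
  is_worst r [set a; c] w -> is_worst r [set a'; c'] w' -> pref r w w'.
Proof.
move=> le_aa' le_cc' [/set2P[]-> _] [_ w'_min].
- exact: pref_trans le_aa' (w'_min a' (set21 a' c')).
- exact: pref_trans le_cc' (w'_min c' (set22 a' c')).
Qed.

End TwoElementSets.

Lemma pref_inj (X : finType) : injective (@pref X).
Proof.
case=> p1 ? ? ? ?; case=> p2 ? ? ? ? /= eq_p; subst p2.
by f_equal; apply: proof_irrelevance.
Qed.

Lemma restrict_upd (V A : finType) (B : {set A}) (P : profile V A) i Pi' :
  restrict_prof (upd P i Pi') B = upd (restrict_prof P B) i (restrict B Pi').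
Proof.
apply: functional_extensionality => j.
by rewrite /restrict_prof /upd; case: eqP.
Qed.

Lemma strategy_proof_restrict (V A : finType) (B : {set A})
    (G : profile V (sub B) -> sub B) :
  strategy_proof G -> forall (P : profile V A) i Pi',
  pref (P i) (val (G (restrict_prof P B)))
             (val (G (restrict_prof (upd P i Pi') B))).
Proof.
move=> spG P i Pi'; rewrite restrict_upd.
exact: spG (restrict_prof P B) i (restrict B Pi').
Qed.

Section Lift.
Variables (A : finType) (B : {set A}) (Q : lorder (sub B)).

Definition lift_pref : rel A := fun x y =>
  match (insub x : option (sub B)), (insub y : option (sub B)) with
  | Some a, Some b => pref Q a b
  | Some _, None => true
  | None, Some _ => false
  | None, None => enum_rank x <= enum_rank y
  end.

Lemma lift_pref_refl : reflexive lift_pref.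
Proof.
by move=> x; rewrite /lift_pref; case: insubP => [a _ _|_]; rewrite ?pref_refl.
Qed.

Lemma lift_pref_anti : antisymmetric lift_pref.
Proof.
move=> x y; rewrite /lift_pref.
case: insubP => [a _ <-|_]; case: insubP => [b _ <-|_] //.
- by move=> /pref_anti ->.
- by rewrite -eqn_leq => /eqP/ord_inj/enum_rank_inj.
Qed.

Lemma lift_pref_trans : transitive lift_pref.
Proof.
move=> y x z; rewrite /lift_pref.
do 3!case: insubP => [? _ _|_] //.
- exact: pref_trans.
- exact: leq_trans.
Qed.

Lemma lift_pref_total : total lift_pref.
Proof.
move=> x y; rewrite /lift_pref.
do 2!case: insubP => [? _ _|_] //.
- exact: pref_total.
- exact: leq_total.
Qed.

Definition lift : lorder A :=
  LOrder lift_pref_refl lift_pref_anti lift_pref_trans lift_pref_total.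

Lemma lift_val (a b : sub B) : pref lift (val a) (val b) = pref Q a b.
Proof. by rewrite /= /lift_pref !valK. Qed.

Lemma lift_top (x y : A) : x \in B -> y \notin B -> pref lift x y.
Proof.
move=> xB yNB; rewrite /= /lift_pref insubT.
by case: insubP => [? yB _|_] //; rewrite yB in yNB.
Qed.

Lemma restrict_lift : restrict B lift = Q.
Proof.
apply: pref_inj; do 2!apply: functional_extensionality => ?.
exact: lift_val.
Qed.

Lemma is_best_lift (a : sub B) (k : A) :
  k \notin B -> is_best lift [set val a; k] (val a).
Proof.
move=> kNB; split=> [|y /set2P[]->]; first exact: set21.
- exact: pref_refl.
- exact: lift_top (valP a) kNB.
Qed.

End Lift.

Lemma strategy_proof_of_SPO (V A : finType) (B : {set A})
    (G : profile V (sub B) -> sub B)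
    (F : profile V A -> {set A}) (K : profile V A -> A) :
  (forall P, K P \notin B) ->
  (forall P, F P = [set val (G (restrict_prof P B)); K P]) ->
  SPO F -> strategy_proof G.
Proof.
move=> KNB defF spoF Q i Qi'.
pose P : profile V A := fun j => lift (Q j).
have restrict_P : restrict_prof P B = Q.
  by apply: functional_extensionality => j; exact: restrict_lift.
have restrict_P' : restrict_prof (upd P i (lift Qi')) B = upd Q i Qi'.
  by rewrite restrict_upd restrict_P restrict_lift.
rewrite -lift_val; apply: (spoF P i (lift Qi')).
- by rewrite defF restrict_P; exact: is_best_lift.
- by rewrite defF restrict_P'; exact: is_best_lift.
Qed.

Theorem proposition21 (V A : finType) (B C : {set A})
  (G : profile V (sub B) -> sub B) (H : profile V (sub C) -> sub C) :
  0 < #|V| ->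
  [disjoint B & C] -> B :|: C = [set: A] ->
  (SPP (consular G H) /\ SPO (consular G H)) <->
  (strategy_proof G /\ strategy_proof H).
Proof.
move=> _ disBC _.
have HNB P : val (H (restrict_prof P C)) \notin B.
  by rewrite (disjointFl disBC (valP _)).
have GNC P : val (G (restrict_prof P B)) \notin C.
  by rewrite (disjointFr disBC (valP _)).
split=> [[_ spo] | [spG spH]].
- split; first exact: strategy_proof_of_SPO HNB (fun P => erefl) spo.
  by apply: strategy_proof_of_SPO GNC _ spo => P; exact: setUC.
- have le_G := strategy_proof_restrict spG.
  have le_H := strategy_proof_restrict spH.
  split=> P i Pi' x x'.
  + by apply: worst_set2_mono (le_G P i Pi') (le_H P i Pi').
  + by apply: best_set2_mono (le_G P i Pi') (le_H P i Pi').
Qed.
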